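(* Let $U\subset M_{\mathbb R}$ be a convex open set, let $\mathbf w=(m,P,\Theta)$ be a wall in $U$ with $P$ a tropical hyperplane in $U$, and write $\mathrm{Log}(\Theta)=\sum_{j,k\ge1}a_{jk}\,z^{km}\check\partial_n\,t^j$ as in the context. Let $u_2$ be an affine function on $U$ with $P=\{u_2=0\}$ and $u_2>0$ on $H_+$, and put $$\delta_m:=\Big(\frac{1}{\hbar\pi}\Big)^{1/2}e^{-u_2^2/\hbar}\,du_2 .$$ Then the element $\Pi:=-\delta_m\cdot\mathrm{Log}(\Theta)=-\sum_{j,k\ge1}a_{jk}\,\delta_m\,z^{km}\check\partial_n\,t^j\in\widehat{\mathbf G}^1(U)$ satisfies the Maurer–Cartan equation $\bar\partial\Pi+\tfrac12[\Pi,\Pi]=0$.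
   Context: Let $M\cong\mathbb Z^n$ be a lattice, $N=\mathrm{Hom}(M,\mathbb Z)$, $(m,n)\in\mathbb Z$ the natural pairing, $M_{\mathbb R}=M\otimes\mathbb R$. Open subsets of $M_{\mathbb R}$ carry the standard affine structure with flat connection $\nabla$ and affine coordinates $x_1,\dots,x_n$. Fix a Riemannian metric $g=(g_{jk})$ (of Hessian type) on $U$ and a parameter $\hbar>0$. For $n\in N$ (coordinates $n^j$) let $\partial_n:=\frac{\hbar}{4\pi}\sum_{j,k}n^jg_{jk}\,\partial/\partial x_k$. Let $R=\mathbb C[[t]]$, $\mathbf m=tR$. Let $\Omega^k_\hbar(U)$ be the space of complex $k$-forms on $U$ depending smoothly on $\hbar\in\mathbb R_{>0}$. $\mathbf G^*(U)$ is the space of finite sums $\sum\alpha_m^n\,z^m\check\partial_n$ with $\alpha_m^n\in\Omega^*_\hbar(U)$, $m\in M$, where $z^m$ and $\check\partial_n$ are formal symbols with $\check\partial_n$ additive in $n\in N$; it is graded by form degree, with differential $\bar\partial(\alpha z^m\check\partial_n)=(d\alpha)z^m\check\partial_n$ and bracket $$[\alpha z^m\check\partial_n,\beta z^{m'}\check\partial_{n'}]=\alpha\wedge\beta\,z^{m+m'}\check\partial_{(m',n)n'-(m,n')n}+\alpha\wedge(\nabla_{\partial_n}\beta)\,z^{m+m'}\check\partial_{n'}-(-1)^{|\alpha||\beta|}\beta\wedge(\nabla_{\partial_{n'}}\alpha)\,z^{m+m'}\check\partial_n$$ (extended $R$-bilinearly). $\widehat{\mathbf G}^*(U):=\varprojlim_N\mathbf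 G^*(U)\otimes_{\mathbb C}R/\mathbf m^{N+1}$. A wall $\mathbf w=(m,P,\Theta)$: $m\in M\setminus\{0\}$; $P$ an oriented tropical hyperplane (codimension one affine hyperplane with rational slope) in $U$ parallel to $m$, dividing $U$ into two open half-spaces $H_+$, $H_-$, where $H_+$ is the side into which the normal $\nu_P$ points, $\nu_P$ chosen so that $TP\oplus\mathbb R\nu_P$ has the orientation of $U$; $n\in N$ the unique primitive element vanishing on $TP$ with $(\nu_P,n)<0$; and $\mathrm{Log}(\Theta)=\sum_{j,k\ge1}a_{jk}z^{km}\check\partial_nt^j$ with $a_{jk}\in\mathbb C$ and, for each $j$, $a_{jk}\neq0$ for only finitely many $k$. *)

From HB Require Import structures.
From mathcomp Require Import all_boot all_order all_algebra.
From mathcomp Require Import all_classical all_reals all_analysis.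
From mathcomp Require Import complex.
Set Implicit Arguments. Unset Strict Implicit. Unset Printing Implicit Defensive.
Import Order.TTheory GRing.Theory Num.Theory.
Import numFieldNormedType.Exports.
Local Open Scope ring_scope.
Local Open Scope complex_scope.

Section Defs.
Variables (R : realType) (d : nat).

Definition vec := 'rV[R]_d.          (* points of M_R = R^d *)
Definition lattice := 'rV[int]_d.     (* M and N = Hom(M,Z), identified with Z^d *)
Local Notation C := (R[i]).

Definition pairing (m n : lattice) : int := \sum_(i < d) m 0 i * n 0 i.
Definition pairingR (n : lattice) (x : vec) : R := \sum_(i < d) (n 0 i)%:~R * x 0 i.

Definition primitive (n : lattice) : Prop :=
  forall (k : int) (n' : lattice), n = n' *~ k -> `|k| = 1.

Definition ebasis (k : 'I_d) : vec := delta_mx 0 k.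

Definition pdR (f : vec -> R) (k : 'I_d) (x : vec) : R :=
  derive1 (fun s : R => f (x + s *: ebasis k)) 0.
Definition pd (f : vec -> C) (k : 'I_d) (x : vec) : C :=
  Complex (pdR (fun y => complex.Re (f y)) k x) (pdR (fun y => complex.Im (f y)) k x).

(* complex differential forms on U depending on hbar:
   w hbar x I = coefficient of dx_I (I increasingly ordered) at x *)
Definition form := R -> vec -> {set 'I_d} -> C.

Definition form_scale (c : C) (a : form) : form := fun h x K => c * a h x K.
Definition fun_mul (f : R -> vec -> C) (a : form) : form := fun h x K => f h x * a h x K.

(* sign of dx_I /\ dx_J relative to dx_(I u J) *)
Definition wsign (I J : {set 'I_d}) : C :=
  (-1) ^+ #|[set ij : 'I_d * 'I_d | (ij.1 \in I) && (ij.2 \in J) && (ij.2 < ij.1)%N]|.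

Definition wedge (a b : form) : form := fun h x K =>
  \sum_(I : {set 'I_d}) \sum_(J : {set 'I_d} | [disjoint I & J] && (I :|: J == K))
     wsign I J * a h x I * b h x J.

Definition dform (a : form) : form := fun h x K =>
  \sum_(k in K) (-1) ^+ #|[set i in K | (i < k)%N]| * pd (fun y => a h y (K :\ k)) k x.

Definition dfun (f : vec -> R) : form := fun h x K =>
  \sum_(k < d) (K == [set k])%:R * (pdR f k x)%:C.

Definition proj (p : nat) (a : form) : form := fun h x K =>
  if #|K| == p then a h x K else 0.

Definition nabla (v : R -> vec -> vec) (a : form) : form := fun h x K =>
  \sum_(k < d) (v h x 0 k)%:C * pd (fun y => a h y K) k x.

Definition dvf (g : vec -> 'M[R]_d) (n : lattice) : R -> vec -> vec := fun h x =>
  \row_(k < d) (h / (4 * pi) * \sum_(j < d) (n 0 j)%:~R * g x j k).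

(* elements of G^*(U): finite formal sums of terms  alpha z^m checkpartial_n,
   a term being (alpha, m, n) *)
Definition term := (form * lattice * lattice)%type.
Definition Gelt := seq term.

(* coefficient of z^m checkpartial_(e_j) (checkpartial is additive in n,
   and N is free with basis e_j) *)
Definition coeffG (g : Gelt) (m : lattice) (j : 'I_d) : form := fun h x K =>
  \sum_(t <- g | t.1.2 == m) (t.2 0 j)%:~R * t.1.1 h x K.

Definition br_term (g : vec -> 'M[R]_d) (s t : term) : Gelt :=
  let: (a, m, n) := s in let: (b, m', n') := t in
  [:: (wedge a b, m + m', n' *~ pairing m' n - n *~ pairing m n');
      (wedge a (nabla (dvf g n) b), m + m', n');
      ((fun h x K => - \sum_(p < d.+1) \sum_(q < d.+1)
          (-1) ^+ (p * q) * wedge (proj q b) (nabla (dvf g n') (proj p a)) h x K),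
        m + m', n)].

Definition bracketG (g : vec -> 'M[R]_d) (u v : Gelt) : Gelt :=
  flatten [seq br_term g s t | s <- u, t <- v].

Definition dbarG (u : Gelt) : Gelt := [seq (dform t.1.1, t.1.2, t.2) | t <- u].

Definition scaleG (c : C) (u : Gelt) : Gelt :=
  [seq (form_scale c t.1.1, t.1.2, t.2) | t <- u].

Definition Gzero (U : set vec) (u : Gelt) : Prop :=
  forall (h : R), 0 < h -> forall x, U x ->
  forall (m : lattice) (j : 'I_d) (K : {set 'I_d}), coeffG u m j h x K = 0.

(* elements of hat G^*(U) = G^*(U)[[t]]: sequence of t^N-coefficients *)
Definition Ghat := nat -> Gelt.

Definition MaurerCartan (U : set vec) (g : vec -> 'M[R]_d) (Pi : Ghat) : Prop :=
  forall N : nat,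
    Gzero U (dbarG (Pi N) ++
      scaleG (2%:R)^-1 (flatten [seq bracketG g (Pi i) (Pi (N - i)%N) | i <- iota 0 N.+1])).

Definition hessian_metric (U : set vec) (g : vec -> 'M[R]_d) : Prop :=
  (forall x, U x -> (g x)^T = g x) /\
  (forall x, U x -> forall v : 'rV[R]_d, v != 0 -> 0 < (v *m g x *m v^T) 0 0) /\
  (exists phi : vec -> R, forall x, U x -> forall j k,
       g x j k = pdR (fun y => pdR phi j y) k x).

Definition PiWall (m n : lattice) (a : nat -> nat -> C) (Kb : nat -> nat)
  (delta : form) : Ghat := fun N =>
  if N is 0 then [::] else
  [seq (form_scale (- a N k) delta, m *+ k, n) | k <- iota 1 (Kb N)].

Definition delta_form (u2 : vec -> R) : form :=
  fun_mul (fun h x => (Num.sqrt (1 / (h * pi)) * expR (- (u2 x ^+ 2) / h))%:C) (dfun u2).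

End Defs.

From Pilot Require Import Defs.
From HB Require Import structures.
From mathcomp Require Import all_boot all_order all_algebra.
From mathcomp Require Import all_classical all_reals all_analysis.
From mathcomp Require Import complex ring.
From Stdlib Require List.
Set Implicit Arguments. Unset Strict Implicit. Unset Printing Implicit Defensive.
Import Order.TTheory GRing.Theory Num.Theory.
Import numFieldNormedType.Exports.
Local Open Scope ring_scope.
Local Open Scope complex_scope.

(** Every term of [Pi] has the shape [f_h(u2) du2 z^(km) d_n] with [f_h] the
Gaussian profile.  Because [u2] is affine, [du2 = sum_k l_k dx_k] has constant
coefficients, so every coefficientwise derivative of such a form is again a
multiple of [du2].  Hence [dbar Pi] is a multiple of [du2 /\ du2 = 0]; in the
bracket of two terms the two connection terms are wedges of two multiples of
[du2], hence zero, and the remaining term carries [(k'm, n) n - (km, n) n = 0]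
since [(m, n) = 0]. *)

Section OneForms.
Variables (R : realType) (d : nat) (l : 'rV[R]_d).

Definition oneform (K : {set 'I_d}) : R[i] :=
  \sum_(k < d) (K == [set k])%:R * (l 0 k)%:C.

Lemma oneform_set1 i : oneform [set i] = (l 0 i)%:C.
Proof.
rewrite /oneform (bigD1 i) //= eqxx mul1r big1 ?addr0 // => k ki.
by rewrite (inj_eq set1_inj) eq_sym (negPf ki) mul0r.
Qed.

Lemma oneform_eq0 (K : {set 'I_d}) : #|K| != 1%N -> oneform K = 0.
Proof.
move=> K1; rewrite /oneform big1 // => k _.
have [eK | _] := eqVneq K [set k]; last by rewrite mul0r.
by rewrite eK cards1 in K1.
Qed.

Lemma wsign_set1 (i j : 'I_d) :
  wsign R [set i] [set j] = if (j < i)%N then -1 else 1.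
Proof.
rewrite /wsign; case: ltnP => ji.
- rewrite -[in RHS](expr1 (-1)) -(cards1 (i, j)); congr (_ ^+ _).
  apply: eq_card => -[p q]; rewrite !inE xpair_eqE.
  by case: (p =P i) => [-> | //]; case: (q =P j) => [-> | //]; rewrite ji.
- rewrite -[in RHS](expr0 (-1)) -(cards0 ('I_d * 'I_d)%type); congr (_ ^+ _).
  apply: eq_card => -[p q]; rewrite !inE.
  by case: (p =P i) => [-> | //]; case: (q =P j) => [-> | //]; rewrite ltnNge ji.
Qed.

Definition oneform_multiple (a : Defs.form R d) (h : R) (x : vec R d) : Prop :=
  exists A, forall K, a h x K = A * oneform K.

Lemma wedge_oneform_multiple_eq0 (a b : Defs.form R d) h x K :
  oneform_multiple a h x -> oneform_multiple b h x -> wedge a b h x K = 0.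
Proof.
move=> [A aE] [B bE].
pose F (I J : {set 'I_d}) : R[i] :=
  if [disjoint I & J] && (I :|: J == K) then wsign R I J * oneform I * oneform J else 0.
have F_antisym I J : F J I = - F I J.
  rewrite /F disjoint_sym finset.setUC; case: ifP => [/andP[IJ _] | _]; last by rewrite oppr0.
  have [/cards1P[i eI] | /oneform_eq0 I0] := boolP (#|I| == 1%N); last first.
    by rewrite I0 !(mulr0, mul0r) oppr0.
  have [/cards1P[j eJ] | /oneform_eq0 J0] := boolP (#|J| == 1%N); last first.
    by rewrite J0 !(mulr0, mul0r) oppr0.
  move: IJ; rewrite eI eJ disjoints1 inE => ij.
  rewrite !wsign_set1 !oneform_set1.
  by case: (ltngtP i j) => [_|_|/val_inj eij] /=; [ring | ring | rewrite eij eqxx in ij].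
have F_sum0 : \sum_I \sum_J F I J = 0.
  suff: (\sum_I \sum_J F I J) *+ 2 = 0 by move/eqP; rewrite mulrn_eq0 => /eqP.
  rewrite mulr2n {1}exchange_big -big_split big1 //= => I _.
  by rewrite -big_split big1 // => J _ /=; rewrite F_antisym addNr.
transitivity (A * B * \sum_I \sum_J F I J); last by rewrite F_sum0 mulr0.
rewrite /wedge mulr_sumr; apply: eq_bigr => I _.
rewrite mulr_sumr big_mkcond /=; apply: eq_bigr => J _.
rewrite /F; case: ifP => _; last by rewrite mulr0.
rewrite aE bE; ring.
Qed.

Lemma dform_eq0 (a : Defs.form R d) h x (A : R[i]) :
  (forall k K, pd (fun y => a h y K) k x = A * oneform K * (l 0 k)%:C) ->
  forall K, dform a h x K = 0.
Proof.
(* The hypothesis says [da = A (l dx) /\ (l dx)]. *)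
move=> pdE K; rewrite /dform; under eq_bigr => k _ do rewrite pdE.
have [/cards2P[i [j [ij ->]]] | K2] := boolP (#|K| == 2%N); last first.
  rewrite big1 // => k kK; rewrite oneform_eq0 ?(mulr0, mul0r) //.
  by apply: contra_neq K2 => K1; rewrite (cardsD1 k) kK K1.
wlog ij_lt : i j ij / (i < j)%N => [hyp|].
  case: (ltngtP i j) => [|ji|/val_inj eij]; [exact: hyp | | by rewrite eij eqxx in ij].
  by rewrite finset.setUC; apply: hyp; rewrite // eq_sym.
have Di : [set i; j] :\ i = [set j] by rewrite setU1K // inE.
have Dj : [set i; j] :\ j = [set i] by rewrite finset.setUC setU1K // inE eq_sym.
have below_i : #|[set y in [set i; j] | (y < i)%N]| = 0%N.
  apply: eq_card0 => y; rewrite !inE.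
  by case: (y =P i) => [->|_] /=; [rewrite ltnn | case: (y =P j) => [->|_]; rewrite // ltnNge ltnW].
have below_j : #|[set y in [set i; j] | (y < j)%N]| = 1%N.
  rewrite -(cards1 i); apply: eq_card => y; rewrite !inE.
  by case: (y =P i) => [->|_] /=; [rewrite ij_lt | case: (y =P j) => [->|_]; rewrite ?ltnn].
rewrite big_setU1 ?inE //= big_set1 Di Dj below_i below_j !oneform_set1 expr0 expr1.
ring.
Qed.

End OneForms.

Lemma dfunE (R : realType) d (F : vec R d -> R) h x K :
  dfun F h x K = oneform (\row_k pdR F k x) K.
Proof. by apply: eq_bigr => k _; rewrite mxE. Qed.

Lemma is_derive_line (R : realType) (y0 l0 : R) :
  is_derive (0 : R) 1 (fun s : R => y0 + s * l0) l0.
Proof.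
have -> : (fun s : R => y0 + s * l0) = cst y0 + l0 \*: id.
  by apply/funext => s /=; rewrite mulrC.
by apply: is_derive_eq; rewrite add0r /GRing.scale /= mulr1.
Qed.

Definition term_vanishes_at (R : realType) d (h : R) (x : vec R d) (t : term R d) :=
  t.2 = 0 \/ forall K, t.1.1 h x K = 0.

Lemma coeffG_eq0 (R : realType) d (u : Gelt R d) h x :
  List.Forall (term_vanishes_at h x) u -> forall m j K, coeffG u m j h x K = 0.
Proof.
move=> u0 m j K; elim: u u0 => [|t u IH] u0; rewrite /coeffG ?big_nil // big_cons.
have /List.Forall_cons_iff[t0 /IH] := u0; rewrite /coeffG => ->.
by case: ifP => _ //; case: t0 => [-> | ->]; rewrite ?mxE ?mulr0z ?mul0r ?mulr0 addr0.
Qed.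

Lemma Forall_bracketG (R : realType) d (g : vec R d -> 'M[R]_d) (P Q : term R d -> Prop) u v :
  List.Forall P u -> List.Forall P v ->
  (forall s t, P s -> P t -> List.Forall Q (br_term g s t)) ->
  List.Forall Q (bracketG g u v).
Proof.
move=> Pu Pv PQ; apply/List.Forall_concat/List.Forall_concat/List.Forall_map.
apply: List.Forall_impl Pu => s Ps; apply/List.Forall_map.
by apply: List.Forall_impl Pv => t Pt; apply: PQ.
Qed.

Lemma pairing_mulrn d (m n : lattice d) k : pairing (m *+ k) n = pairing m n *+ k.
Proof. by rewrite /pairing -sumrMnl; apply: eq_bigr => i _; rewrite mulmxnE mulrnAl. Qed.

Section AffineProfile.
Variables (R : realType) (d : nat) (U : set (vec R d)).
Hypothesis U_open : open U.
Variables (u2 : vec R d -> R) (l : 'rV[R]_d) (b : R).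
Hypothesis u2_affine : forall x, U x -> u2 x = \sum_(i < d) l 0 i * x 0 i + b.

Local Open Scope classical_set_scope.
Lemma near0_shift_in y (k : 'I_d) : U y -> \forall s \near 0, U (y + s *: @ebasis R d k).
Proof.
move=> Uy.
have shift_cvg : (fun s : R => y + s *: @ebasis R d k) @ nbhs 0 --> y.
  rewrite -[X in _ --> X]addr0 -[X in _ --> y + X](scale0r (@ebasis R d k)).
  by apply: cvgD; [exact: cvg_cst | apply: cvgZr_tmp; exact: cvg_id].
by apply: shift_cvg; move: U_open; rewrite openE => /(_ y Uy).
Qed.
Local Close Scope classical_set_scope.

Lemma u2_shift y (k : 'I_d) s :
  U y -> U (y + s *: @ebasis R d k) -> u2 (y + s *: @ebasis R d k) = u2 y + s * l 0 k.
Proof.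
move=> Uy Us; rewrite !u2_affine // addrAC; congr (_ + _).
under eq_bigr do rewrite !mxE mulrDr.
rewrite big_split /=; congr (_ + _).
rewrite (bigD1 k) //= eqxx mulr1 [l 0 k * s]mulrC big1 ?addr0 // => i /negPf ik.
by rewrite ik !mulr0.
Qed.

Lemma pdR_comp_u2 (G : vec R d -> R) (f : R -> R) f' x k :
  U x -> (forall y, U y -> G y = f (u2 y)) -> is_derive (u2 x) 1 f f' ->
  pdR G k x = f' * l 0 k.
Proof.
move=> Ux GE f_der; rewrite /pdR derive1E.
rewrite (@near_eq_derive _ _ _ _ (f \o (fun s => u2 x + s * l 0 k))); last first.
  near=> s; rewrite /= GE ?u2_shift //; near: s; exact: near0_shift_in.
apply: derive_val; apply: is_derive1_comp; last exact: is_derive_line.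
by rewrite mul0r addr0.
Unshelve. all: by end_near.
Qed.

Lemma pd_comp_u2 (F : vec R d -> R[i]) (z : R[i]) (f : R -> R) f' x k :
  U x -> (forall y, U y -> F y = z * (f (u2 y))%:C) -> is_derive (u2 x) 1 f f' ->
  pd F k x = z * (f' * l 0 k)%:C.
Proof.
move=> Ux FE f_der; rewrite /pd.
have Re_zr (r : R) : complex.Re (z * r%:C) = complex.Re z * r.
  by case: (z) => zr zi /=; ring.
have Im_zr (r : R) : complex.Im (z * r%:C) = complex.Im z * r.
  by case: (z) => zr zi /=; ring.
rewrite (@pdR_comp_u2 _ (complex.Re z \*: f) (complex.Re z *: f')) ?is_deriveZ //; last first.
  by move=> y Uy; rewrite FE // Re_zr.
rewrite (@pdR_comp_u2 _ (complex.Im z \*: f) (complex.Im z *: f')) ?is_deriveZ //; last first.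
  by move=> y Uy; rewrite FE // Im_zr.
by case: (z) => zr zi /=; congr Complex; rewrite /GRing.scale /=; ring.
Qed.

Lemma dfun_u2 h x K : U x -> dfun u2 h x K = oneform l K.
Proof.
move=> Ux; rewrite dfunE; congr oneform; apply/rowP => k.
by rewrite mxE (@pdR_comp_u2 _ id 1) ?mul1r //; exact: is_derive_id.
Qed.

Variable f : R -> R -> R.
Hypothesis f_derivable : forall h t, derivable (f h) t 1.

Definition profile_form : Defs.form R d :=
  fun_mul (fun h x => (f h (u2 x))%:C) (dfun u2).

Lemma profile_formE c h y K :
  U y -> form_scale c profile_form h y K = c * oneform l K * (f h (u2 y))%:C.
Proof. by move=> Uy; rewrite /form_scale /profile_form /fun_mul dfun_u2 //; ring. Qed.

Lemma pd_profile_form c h x k K : U x ->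
  pd (fun y => form_scale c profile_form h y K) k x
  = c * ('D_1 (f h) (u2 x))%:C * oneform l K * (l 0 k)%:C.
Proof.
move=> Ux; rewrite (pd_comp_u2 (z := c * oneform l K) k Ux _ (derivableP (@f_derivable h (u2 x)))).
  by rewrite rmorphM /=; ring.
by move=> y Uy; rewrite profile_formE.
Qed.

Lemma dform_profile_form c h x K : U x -> dform (form_scale c profile_form) h x K = 0.
Proof.
move=> Ux; apply: (dform_eq0 (A := c * ('D_1 (f h) (u2 x))%:C)) => k K'.
exact: pd_profile_form.
Qed.

Lemma profile_form_multiple c h x :
  U x -> oneform_multiple l (form_scale c profile_form) h x.
Proof. by move=> Ux; exists (c * (f h (u2 x))%:C) => K; rewrite profile_formE // mulrAC. Qed.

Lemma nabla_profile_form_multiple v c h x :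
  U x -> oneform_multiple l (nabla v (form_scale c profile_form)) h x.
Proof.
move=> Ux; exists (\sum_k (v h x 0 k)%:C * (c * ('D_1 (f h) (u2 x))%:C * (l 0 k)%:C)) => K.
by rewrite /nabla mulr_suml; apply: eq_bigr => k _; rewrite pd_profile_form //; ring.
Qed.

Lemma wedge_profile_nabla_eq0 c c' v h x K : U x ->
  wedge (form_scale c profile_form) (nabla v (form_scale c' profile_form)) h x K = 0.
Proof.
move=> Ux; apply: wedge_oneform_multiple_eq0.
- exact: profile_form_multiple.
- exact: nabla_profile_form_multiple.
Qed.

Lemma proj_profile_form p c :
  Defs.proj p (form_scale c profile_form) = form_scale ((p == 1%N)%:R * c) profile_form.
Proof.
apply/funext => h; apply/funext => y; apply/funext => K.
rewrite /Defs.proj /form_scale /profile_form /fun_mul.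
have [K1 | K1] := eqVneq #|K| 1%N.
- by rewrite K1 eq_sym; case: eqP => _; rewrite ?mul1r ?mul0r.
- by rewrite dfunE oneform_eq0 // !mulr0; case: ifP.
Qed.

Variables (g : vec R d -> 'M[R]_d) (m n : lattice d).
Hypothesis mn_orth : pairing m n = 0.

Definition wall_term (t : term R d) : Prop :=
  exists c k, t = (form_scale c profile_form, m *+ k, n).

Lemma PiWall_wall_terms a Kb N : List.Forall wall_term (PiWall m n a Kb profile_form N).
Proof.
case: N => [|N] //=; apply/List.Forall_map/List.Forall_forall => k _.
by exists (- a N.+1 k), k.
Qed.

Lemma br_term_wall_vanishes h x s t : U x -> wall_term s -> wall_term t ->
  List.Forall (term_vanishes_at h x) (br_term g s t).
Proof.
move=> Ux [c [k ->]] [c' [k' ->]]; apply/List.Forall_forall => u /=.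
case=> [<- | [<- | [<- | []]]] /=.
- by left; rewrite !pairing_mulrn mn_orth !mul0rn !mulr0z subrr.
- by right => K; exact: wedge_profile_nabla_eq0.
- right => K /=; rewrite big1 ?oppr0 // => p _; rewrite big1 // => q _.
  by rewrite !proj_profile_form wedge_profile_nabla_eq0 ?mulr0.
Qed.

Lemma MaurerCartan_PiWall a Kb : MaurerCartan U g (PiWall m n a Kb profile_form).
Proof.
move=> N h _ x Ux; apply: coeffG_eq0; apply/List.Forall_app; split.
- apply/List.Forall_map; apply: List.Forall_impl (PiWall_wall_terms a Kb N) => _ [c [k ->]].
  by right => K; exact: dform_profile_form.
- apply/List.Forall_map/List.Forall_concat/List.Forall_map/List.Forall_forall => i _.
  have := Forall_bracketG (PiWall_wall_terms a Kb i) (PiWall_wall_terms a Kb (N - i))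
    (fun _ _ => br_term_wall_vanishes h Ux).
  apply: List.Forall_impl => t [t0 | t0]; [left | right => K]; rewrite /= ?t0 //.
  by rewrite /form_scale t0 mulr0.
Qed.

End AffineProfile.

Definition gauss (R : realType) (h t : R) : R :=
  Num.sqrt (1 / (h * pi)) * expR (- (t ^+ 2) / h).

Lemma derivable_gauss (R : realType) (h t : R) : derivable (gauss h) t 1.
Proof.
have -> : gauss h = Num.sqrt (1 / (h * pi)) \*: (expR \o ((- h^-1) \*: (@GRing.exp R ^~ 2))).
  by apply/funext => s; rewrite /gauss /=; congr (_ * expR _); rewrite mulrC mulrN -mulNr.
apply: derivableZ.
have square_der := derivableP (@derivableZ _ _ _ _ (- h^-1) _ _ (@exprn_derivable R 2 t 1)).
by case: (is_derive1_comp (is_derive_expR _) square_der).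
Qed.

Theorem proposition4p4 (R : realType) (d : nat)
  (U : set (vec R d)) (hUopen : open U) (hUconv : convex_set U)
  (g : vec R d -> 'M[R]_d) (hg : hessian_metric U g)
  (m n : lattice d) (c : R)
  (hm : m != 0) (hn : primitive n) (hpar : pairing m n = 0)
  (hP : exists x, U x /\ pairingR n x = c)
  (a : nat -> nat -> R[i]) (Kb : nat -> nat)
  (ha : forall j k : nat, (Kb j < k)%N -> a j k = 0)
  (u2 : vec R d -> R)
  (hu2aff : exists (l : 'rV[R]_d) (b : R),
       forall x, U x -> u2 x = \sum_(i < d) l 0 i * x 0 i + b)
  (hu2P : forall x, U x -> (u2 x = 0 <-> pairingR n x = c))
  (hu2pos : forall x, U x -> pairingR n x < c -> 0 < u2 x) :
  MaurerCartan U g (PiWall m n a Kb (delta_form u2)).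
Proof.
have [l [b u2_affine]] := hu2aff.
(* [delta_form u2] unfolds to [profile_form u2 gauss]. *)
exact: (MaurerCartan_PiWall hUopen u2_affine (@derivable_gauss R) g hpar).
Qed.
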